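(* Let $\rho=\mathrm{WC}$ on $L=L^1$, where $\mathrm{WC}(X):=\operatorname{ess\,sup}(-X)$. Then the market admits $\mathrm{WC}$-arbitrage if and only if it admits arbitrage of the first kind, and it admits strong $\mathrm{WC}$-arbitrage if and only if it admits arbitrage of the second kind.
   Context: Let $(\Omega,\mathcal{F},\mathbb{P})$ be a probability space and a market: riskless asset $S^0_0=1$, $S^0_1=1+r$, $r>-1$; risky assets $S^1,\dots,S^d$ with constants $S^i_0>0$ and real-valued $\mathcal{F}$-measurable $S^i_1$; returns $R^i:=(S^i_1-S^i_0)/S^i_0$. Standing assumptions: nonredundancy (if $\theta\in\mathbb{R}^{1+d}$ with $\sum_{i=0}^d\theta^iS^i_t=0$ a.s. for $t\in\{0,1\}$ then $\theta=0$), $R^i\in L^1$, $\mathbb{E}[R^i]\ne r$ for some $i$. Excess return of $\pi\in\mathbb{R}^d$: $X_\pi:=\pi\cdot(R-r\mathbf{1})$. $\pi$ is $\rho$-efficient if $\mathbb{E}[X_\pi]\ge0$ and no $\pi'$ has $\mathbb{E}[X_{\pi'}]\ge\mathbb{E}[X_\pi]$ and $\rho(X_{\pi'})\le\rho(X_\pi)$ with one inequality strict; $\rho$-arbitrage: no $\rho$-efficient portfolio exists; strong $\rho$-arbitrage: for every $\pi$ there is $\pi'$ with $\mathbb{E}[X_{\pi'}]>\mathbb{E}[X_\pi]$ and $\rho(X_{\pi'})<\rho(X_\pi)$. Arbitrage of the first kind: $(\theta^0,\theta)\in\mathbb{R}^{1+d}$ with $\theta^0S^0_0+\theta\cdot S_0\le0$,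 $\theta^0S^0_1+\theta\cdot S_1\ge0$ a.s., $\mathbb{P}[\theta^0S^0_1+\theta\cdot S_1>0]>0$. Arbitrage of the second kind: $(\theta^0,\theta)$ with $\theta^0S^0_0+\theta\cdot S_0<0$ and $\theta^0S^0_1+\theta\cdot S_1\ge0$ a.s. *)

From HB Require Import structures.
From mathcomp Require Import all_boot all_order all_algebra.
From mathcomp Require Import all_classical all_reals all_analysis.
From mathcomp Require Import ess_sup_inf.
Set Implicit Arguments. Unset Strict Implicit. Unset Printing Implicit Defensive.
Import Order.TTheory GRing.Theory Num.Theory.
Import numFieldNormedType.Exports.
Local Open Scope classical_set_scope.
Local Open Scope ring_scope.

Section Market.
Context {R : realType} {dT : measure_display} {T : measurableType dT}.
Variable (P : probability T R).
(* one-period market: riskless rate r, n risky assets with initial prices S0 i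
   and terminal prices S1 i (random variables) *)
Variables (r : R) (n : nat) (S0 : 'I_n -> R) (S1 : 'I_n -> T -> R).

Definition ret (i : 'I_n) : T -> R := fun w => (S1 i w - S0 i) / S0 i.

Definition excess (pi : 'I_n -> R) : T -> R :=
  fun w => \sum_(i < n) pi i * (ret i w - r).

Definition expect (X : T -> R) : \bar R := (\int[P]_w (X w)%:E)%E.

Definition market_assumptions : Prop :=
  [/\ -1 < r /\ (forall i, 0 < S0 i),
      (forall i, measurable_fun setT (S1 i)),
      (* nonredundancy *)
      (forall (th0 : R) (th : 'I_n -> R),
         th0 * 1 + \sum_(i < n) th i * S0 i = 0 ->
         (\forall w \ae P, th0 * (1 + r) + \sum_(i < n) th i * S1 i w = 0) ->
         th0 = 0 /\ (forall i, th i = 0)),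
      (forall i, P.-integrable setT (fun w => (ret i w)%:E)) &
      (exists i, expect (ret i) != r%:E)].

Definition WC (X : T -> R) : \bar R := ess_sup P (fun w => (- X w)%:E).

Section Rho.
Variable rho : (T -> R) -> \bar R.

Definition rho_efficient (pi : 'I_n -> R) : Prop :=
  (0 <= expect (excess pi))%E /\
  ~ exists pi' : 'I_n -> R,
      [/\ (expect (excess pi) <= expect (excess pi'))%E,
          (rho (excess pi') <= rho (excess pi))%E &
          ((expect (excess pi) < expect (excess pi'))%E \/
           (rho (excess pi') < rho (excess pi))%E)].

Definition rho_arbitrage : Prop := ~ exists pi, rho_efficient pi.

Definition strong_rho_arbitrage : Prop :=
  forall pi : 'I_n -> R, exists pi' : 'I_n -> R,
    (expect (excess pi) < expect (excess pi'))%E /\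
    (rho (excess pi') < rho (excess pi))%E.
End Rho.

Definition value1 (th0 : R) (th : 'I_n -> R) (w : T) : R :=
  th0 * (1 + r) + \sum_(i < n) th i * S1 i w.
Definition value0 (th0 : R) (th : 'I_n -> R) : R :=
  th0 * 1 + \sum_(i < n) th i * S0 i.

Definition arbitrage_first_kind : Prop :=
  exists (th0 : R) (th : 'I_n -> R),
    [/\ value0 th0 th <= 0,
        (\forall w \ae P, 0 <= value1 th0 th w) &
        (0 < P [set w | (0 < value1 th0 th w)%R])%E].

Definition arbitrage_second_kind : Prop :=
  exists (th0 : R) (th : 'I_n -> R),
    value0 th0 th < 0 /\ (\forall w \ae P, 0 <= value1 th0 th w).
End Market.

From HB Require Import structures.
From mathcomp Require Import all_boot all_order all_algebra.
From mathcomp Require Import all_classical all_reals all_analysis.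
From mathcomp Require Import ess_sup_inf.
From mathcomp Require Import measurable_realfun ring.

(* WC(X) <= 0 says that X >= 0 almost surely, and WC(X) < 0 that X >= eps almost
   surely for some eps > 0.  A portfolio pi is the strategy theta_i = pi_i / S^i_0
   whose terminal value is X_pi plus (1 + r) times its initial value, so arbitrage
   of the first kind amounts to a portfolio with WC(X_pi) <= 0 < E[X_pi], and
   arbitrage of the second kind to a portfolio with WC(X_pi) < 0.  Adding a
   portfolio of the first type to any pi raises the mean without raising WC, so
   nothing is efficient; conversely, a portfolio dominating 0 is of that type.  A
   portfolio with X >= eps scaled by a large l beats any given portfolio in mean
   and in risk, because WC(l X) <= -l eps and WC never takes the value -oo. *)

Set Implicit Arguments. Unset Strict Implicit. Unset Printing Implicit Defensive.
Import Order.TTheory GRing.Theory Num.Theory.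
Import numFieldNormedType.Exports.
Local Open Scope classical_set_scope.
Local Open Scope ring_scope.

Section AlmostEverywherePositivity.
Context {R : realType} {d : measure_display} {T : measurableType d}.
Variable mu : {measure set T -> \bar R}.

Lemma measure_gt0_eq0P (f : T -> R) : measurable_fun setT f ->
  (mu [set x | (0 < f x)%R] = 0)%E <-> \forall x \ae mu, f x <= 0.
Proof.
move=> mf.
have -> : [set x | 0 < f x] = (EFin \o f) @^-1` `]0%E, +oo[.
  by apply/seteqP; split => x /=; rewrite in_itv /= andbT lte_fin.
rewrite -ae_le_measureP; last exact/measurable_EFinP.
by split; apply: filterS => x /=; rewrite lee_fin.
Qed.

Lemma ae_ge0_integral_gt0P (f : T -> R) :
  mu.-integrable setT (EFin \o f) -> (\forall x \ae mu, 0 <= f x) ->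
  (0 < \int[mu]_x (f x)%:E)%E <-> (0 < mu [set x | (0 < f x)%R])%E.
Proof.
move=> intf f_ge0; have mEf := measurable_int mu intf.
have mf : measurable_fun setT f := (measurable_EFinP _ _).1 mEf.
have intE : (\int[mu]_x (f x)%:E = \int[mu]_x `|(f x)%:E|)%E.
  apply: ae_eq_integral => //.
    exact/measurable_EFinP/measurableT_comp.
  by apply: filterS f_ge0 => x fx0 _ /=; rewrite ger0_norm.
have int_eq0 : (\int[mu]_x (f x)%:E = 0)%E <-> \forall x \ae mu, f x <= 0.
  rewrite intE (ae_eq_integral_abs mu measurableT mEf); split => f0.
    by apply: filterS f0 => x /(_ I) /= [->].
  apply: filterS2 f_ge0 f0 => x f0 f0' _ /=.
  by congr EFin; apply/eqP; rewrite eq_le f0 f0'.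
rewrite !lt0e measure_ge0 intE integral_ge0 // !andbT -intE.
by split; apply: contra_neq; rewrite (measure_gt0_eq0P mf) -int_eq0.
Qed.
End AlmostEverywherePositivity.

Lemma probability_ae_proper {R : realType} {d : measure_display} {T : measurableType d}
  (P : probability T R) : ProperFilter (almost_everywhere P).
Proof.
apply: ae_properfilter_algebraOfSetsType.
(* rewriting forwards fails: the goal applies [P] through its measure coercion *)
by move: (@lte01 R); rewrite -(probability_setT P).
Qed.

Lemma ae_gt0_integral_gt0 {R : realType} {d : measure_display} {T : measurableType d}
    (P : probability T R) (f : T -> R) :
  P.-integrable setT (EFin \o f) -> (\forall x \ae P, 0 < f x) ->
  (0 < \int[P]_x (f x)%:E)%E.
Proof.
move=> intf f_gt0.
have mf := (measurable_EFinP _ _).1 (measurable_int P intf).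
apply/ae_ge0_integral_gt0P => //; first by apply: filterS f_gt0 => x /ltW.
rewrite lt0e measure_ge0 andbT; apply/eqP => /(measure_gt0_eq0P P mf) f_le0.
have ae_false : \forall x \ae P, False.
  by apply: filterS2 f_gt0 f_le0 => x /lt_le_trans fx/fx; rewrite ltxx.
by have [] := @filter_ex _ _ (probability_ae_proper P) _ ae_false.
Qed.

Section WorstCase.
Context {R : realType} {dT : measure_display} {T : measurableType dT}.
Variable P : probability T R.
Implicit Types X Y : T -> R.

Lemma WC_neqNy X : WC P X != -oo%E.
Proof.
apply/negP => /eqP /ess_sup_eqNyP WCNy.
by have [] := @filter_ex _ _ (probability_ae_proper P) _ WCNy.
Qed.

Lemma WC_leP X (c : R) : (WC P X <= c%:E)%E <-> \forall w \ae P, - c <= X w.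
Proof.
rewrite /WC; split => [/ess_supP|Xc]; last apply/ess_supP.
  by apply: filterS => w; rewrite lee_fin lerNl.
by apply: filterS Xc => w; rewrite lee_fin lerNl.
Qed.

Lemma WC_lt0P X :
  (WC P X < 0)%E <-> exists2 eps, 0 < eps & \forall w \ae P, eps <= X w.
Proof.
split => [|[eps eps_gt0 epsX]]; last first.
  apply: (@le_lt_trans _ _ (- eps)%:E); last by rewrite lte_fin oppr_lt0.
  by apply/WC_leP; rewrite opprK.
have := WC_neqNy X; case E : (WC P X) => [c| |] // _; rewrite lte_fin => c_lt0.
exists (- c); first by rewrite oppr_gt0.
by apply/WC_leP; rewrite E.
Qed.

Lemma le_WC X Y : (\forall w \ae P, X w <= Y w) -> (WC P Y <= WC P X)%E.
Proof. by move=> XY; apply: le_ess_sup; apply: filterS XY => w; rewrite lee_fin lerN2. Qed.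

Lemma WC_lt0_expect_gt0 X : P.-integrable setT (EFin \o X) ->
  (WC P X < 0)%E -> (0 < expect P X)%E.
Proof.
move=> intX /WC_lt0P[eps eps_gt0 epsX]; apply: ae_gt0_integral_gt0 => //.
by apply: filterS epsX => w; apply: lt_le_trans.
Qed.

Lemma exists_real_lt_WC X : exists c : R, (c%:E < WC P X)%E.
Proof.
have := WC_neqNy X; case: (WC P X) => [x| |] // _; last by exists 0; rewrite ltry.
by exists (x - 1); rewrite lte_fin gtrBl.
Qed.

End WorstCase.

Lemma nbhs_pinfty_ltrM {R : realFieldType} (a b : R) :
  0 < a -> \forall l \near +oo, b < l * a.
Proof.
move=> a_gt0; apply: filterS (nbhs_pinfty_gt (num_real (b / a))) => l.
by rewrite ltr_pdivrMr.
Qed.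

Section Market.
Context {R : realType} {dT : measure_display} {T : measurableType dT}.
Variables (P : probability T R) (r : R) (n : nat) (S0 : 'I_n -> R) (S1 : 'I_n -> T -> R).
Hypothesis ret_int : forall i, P.-integrable setT (fun w => (ret S0 S1 i w)%:E).

Local Notation X := (excess r S0 S1).
Local Notation E := (expect P).

Definition mean_excess (pi : 'I_n -> R) : R :=
  \sum_(i < n) pi i * (fine (E (ret S0 S1 i)) - r).

Lemma excessD pi pi' w : X (pi + pi') w = X pi w + X pi' w.
Proof. by rewrite /excess -big_split; apply: eq_bigr => i _; rewrite mulrDl. Qed.

Lemma excessZ c pi w : X (c *: pi) w = c * X pi w.
Proof. by rewrite /excess mulr_sumr; apply: eq_bigr => i _; rewrite mulrA. Qed.

Lemma mean_excessD pi pi' : mean_excess (pi + pi') = mean_excess pi + mean_excess pi'.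
Proof. by rewrite /mean_excess -big_split; apply: eq_bigr => i _; rewrite mulrDl. Qed.

Lemma mean_excessZ c pi : mean_excess (c *: pi) = c * mean_excess pi.
Proof. by rewrite /mean_excess mulr_sumr; apply: eq_bigr => i _; rewrite mulrA. Qed.

Let ret_sub_int i : P.-integrable setT (fun w => (ret S0 S1 i w)%:E - r%:E)%E.
Proof. exact: integrableB (ret_int i) (finite_measure_integrable_cst P r measurableT). Qed.

Let EFin_excess pi :
  EFin \o X pi = (fun w => \sum_(i < n) (pi i)%:E * ((ret S0 S1 i w)%:E - r%:E))%E.
Proof.
by apply/funext => w; rewrite /= /excess -sumEFin; apply: eq_bigr => i _; rewrite EFinM EFinB.
Qed.

Lemma integrable_excess pi : P.-integrable setT (EFin \o X pi).
Proof.
rewrite EFin_excess; apply: integrable_sum => // i _.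
exact: integrableZl (ret_sub_int i).
Qed.

Lemma expect_excess pi : E (X pi) = (mean_excess pi)%:E.
Proof.
have -> : E (X pi) = (\int[P]_w (EFin \o X pi) w)%E by [].
rewrite EFin_excess integral_sum //; last by move=> i; exact: integrableZl.
rewrite /mean_excess -(sumEFin); apply: eq_bigr => i _.
rewrite (integralZl _ (ret_sub_int i)) //.
rewrite (integralB_EFin _ (ret_int i) (finite_measure_integrable_cst P r measurableT)) //.
have -> : (\int[P]_w (cst r w)%:E = r%:E)%E.
  rewrite (integral_cst P measurableT r%:E) -[RHS]mule1; congr (_ * _)%E.
  exact: probability_setT.
rewrite EFinM EFinB fineK //; exact: integrable_fin_num (ret_int i).
Qed.

Lemma measurable_excess pi : measurable_fun setT (X pi).
Proof. exact/measurable_EFinP/(measurable_int P (integrable_excess pi)). Qed.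

Lemma excess0 w : X 0 w = 0.
Proof. by rewrite /excess big1 // => i _; rewrite mul0r. Qed.

Lemma mean_excess0 : mean_excess 0 = 0.
Proof. by rewrite /mean_excess big1 // => i _; rewrite mul0r. Qed.

Lemma WC_excess0_le0 : (WC P (X 0%R) <= 0)%E.
Proof. by apply/WC_leP; apply: nearW => w; rewrite excess0 oppr0. Qed.

Hypothesis S0_gt0 : forall i, 0 < S0 i.

Lemma value1E th0 th w : value1 r S1 th0 th w =
  X (fun i => th i * S0 i) w + (1 + r) * value0 S0 th0 th.
Proof.
rewrite /value1 /value0 /excess.
have -> : \sum_(i < n) th i * S0 i * (ret S0 S1 i w - r) =
    \sum_(i < n) th i * S1 i w - (1 + r) * \sum_(i < n) th i * S0 i.
  rewrite mulr_sumr -sumrB; apply: eq_bigr => i _; rewrite /ret.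
  by field; rewrite gt_eqF.
ring.
Qed.

Lemma measurable_value1 th0 th : measurable_fun setT (value1 r S1 th0 th).
Proof.
rewrite (funext (value1E th0 th)).
exact: measurable_funD (measurable_excess _) (measurable_cst _).
Qed.

Lemma portfolio_strategy pi c : exists th0 th,
  value0 S0 th0 th = c /\ forall w, value1 r S1 th0 th w = X pi w + (1 + r) * c.
Proof.
pose th i := pi i / S0 i; exists (c - \sum_(i < n) th i * S0 i), th.
have v0 : value0 S0 (c - \sum_(i < n) th i * S0 i) th = c by rewrite /value0; ring.
split => // w; rewrite value1E v0; congr (X _ w + _).
by apply/funext => i; rewrite /th divfK // gt_eqF.
Qed.

Hypothesis r_gtN1 : -1 < r.

Let r1_gt0 : 0 < 1 + r.
Proof. by rewrite -ltrBlDl sub0r. Qed.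

Lemma arbitrage_first_kindP : arbitrage_first_kind P r S0 S1 <->
  exists pi, (WC P (X pi) <= 0)%E /\ (0 < E (X pi))%E.
Proof.
split => [[th0 [th [v0_le0 v1_ge0 v1_pos]]] | [pi [WC_le0 E_gt0]]].
  pose pi i := th i * S0 i.
  have v1_le_X w : value1 r S1 th0 th w <= X pi w.
    by rewrite value1E gerDl pmulr_rle0.
  have X_ge0 : \forall w \ae P, 0 <= X pi w.
    by apply: filterS v1_ge0 => w /le_trans; apply.
  exists pi; split; first by apply/WC_leP; rewrite oppr0.
  apply/ae_ge0_integral_gt0P => //; first exact: integrable_excess.
  move: v1_pos; rewrite !lt0e !measure_ge0 !andbT; apply: contra_neq.
  rewrite (measure_gt0_eq0P _ (measurable_excess _)).
  rewrite (measure_gt0_eq0P _ (measurable_value1 _ _)).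
  by apply: filterS => w; apply: le_trans.
have [th0 [th [v0 v1]]] := portfolio_strategy pi 0.
have v1X : value1 r S1 th0 th = X pi by apply/funext => w; rewrite v1 mulr0 addr0.
have /WC_leP X_ge0 := WC_le0; rewrite oppr0 in X_ge0.
exists th0, th; rewrite v1X; split; [by rewrite v0 | by [] |].
by apply/ae_ge0_integral_gt0P => //; exact: integrable_excess.
Qed.

Lemma arbitrage_second_kindP : arbitrage_second_kind P r S0 S1 <->
  exists pi, (WC P (X pi) < 0)%E.
Proof.
split => [[th0 [th [v0_lt0 v1_ge0]]] | [pi /WC_lt0P[eps eps_gt0 epsX]]].
  exists (fun i => th i * S0 i); apply/WC_lt0P.
  exists (- ((1 + r) * value0 S0 th0 th)); first by rewrite oppr_gt0 pmulr_rlt0.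
  by apply: filterS v1_ge0 => w; rewrite value1E => v1_ge0; rewrite -subr_ge0 opprK.
have [th0 [th [v0 v1]]] := portfolio_strategy pi (- eps / (1 + r)).
exists th0, th; split; first by rewrite v0 ltr_pdivrMr // mul0r oppr_lt0.
by apply: filterS epsX => w; rewrite v1 mulrC divfK ?gt_eqF // subr_ge0.
Qed.

Lemma WC_arbitrageP : rho_arbitrage P r S0 S1 (WC P) <->
  exists pi, (WC P (X pi) <= 0)%E /\ (0 < E (X pi))%E.
Proof.
have E0 : E (X 0%R) = 0%E by rewrite expect_excess mean_excess0.
split => [no_efficient | [pa [WC_pa_le0 E_pa_gt0]] [pi [_ pi_efficient]]].
  apply: contrapT => no_pa; apply: no_efficient; exists 0%R.
  split => [|[pi [E_ge0 WC_le strict]]]; first by rewrite E0.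
  rewrite E0 in strict; apply: no_pa; exists pi.
  split; first exact: le_trans WC_le WC_excess0_le0.
  case: strict => // WC_lt; apply: WC_lt0_expect_gt0; first exact: integrable_excess.
  exact: lt_le_trans WC_lt WC_excess0_le0.
apply: pi_efficient; exists (pi + pa).
have E_lt : (E (X pi) < E (X (pi + pa)%R))%E.
  by rewrite !expect_excess mean_excessD lte_fin ltrDl -lte_fin -expect_excess.
split; [exact: ltW | | by left].
apply: le_WC; move/WC_leP : WC_pa_le0; rewrite oppr0.
by apply: filterS => w; rewrite excessD lerDl.
Qed.

Lemma strong_WC_arbitrageP : strong_rho_arbitrage P r S0 S1 (WC P) <->
  exists pi, (WC P (X pi) < 0)%E.
Proof.
split => [strong | [pa WC_pa_lt0] pi].
  have [pi [_ WC_lt]] := strong 0%R.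
  by exists pi; exact: lt_le_trans WC_lt WC_excess0_le0.
have := WC_lt0_expect_gt0 (integrable_excess pa) WC_pa_lt0.
rewrite expect_excess lte_fin => E_pa_gt0.
have /WC_lt0P[eps eps_gt0 epsX] := WC_pa_lt0.
have [c c_lt] := exists_real_lt_WC P (X pi).
have : \forall l \near +oo,
    [/\ 0 < l, mean_excess pi < l * mean_excess pa & - c < l * eps].
  near=> l; split; near: l; first exact: nbhs_pinfty_gt.
    exact: nbhs_pinfty_ltrM.
  exact: nbhs_pinfty_ltrM.
move=> /(@filter_ex _ _ proper_pinfty_nbhs) [l [l_gt0 E_lt c_lt']].
exists (l *: pa); split.
  by rewrite !expect_excess mean_excessZ lte_fin.
apply: le_lt_trans c_lt; apply/WC_leP; apply: filterS epsX => w eps_le.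
rewrite excessZ; apply: (le_trans (ltW c_lt')).
by rewrite ler_pM2l.
Unshelve. all: by end_near.
Qed.

End Market.

Theorem proposition3p22 (R : realType) (dT : measure_display) (T : measurableType dT)
  (P : probability T R) (r : R) (n : nat) (S0 : 'I_n -> R) (S1 : 'I_n -> T -> R) :
  market_assumptions P r S0 S1 ->
  (rho_arbitrage P r S0 S1 (WC P) <-> arbitrage_first_kind P r S0 S1) /\
  (strong_rho_arbitrage P r S0 S1 (WC P) <-> arbitrage_second_kind P r S0 S1).
Proof.
case=> [[r_gtN1 S0_gt0] _ _ ret_int _].
by rewrite WC_arbitrageP // arbitrage_first_kindP // strong_WC_arbitrageP //
  arbitrage_second_kindP.
Qed.
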